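(* Consider an $M^{X}/G/1$ queue operating under the LCFS-p-repeat (with resampling) discipline, with Poisson batch arrivals of rate $\lambda$, i.i.d. batch sizes distributed as $X$ with mean $\mu$, i.i.d. service times distributed as $S$ (all independent), and stable, i.e. $E(e^{-\lambda S})>\mu/(\mu+1)$. Let $X_0$ be the number of customers in the first batch of a busy period, $M$ the maximum number of customers in the system during a busy period, and $M(k)$ a random variable distributed as $M$ conditionally on $X_0=k$. Let $T$ be exponential with rate $\lambda$, independent of $S$, and $I=1$ if $T<S$ and $I=0$ otherwise. Then for $k\geq 1$, $$M(k)=_d I\,M(k+X)+(1-I)\max\{k,M(k-1)\},$$ where $M(0)=0$, $I$, $X$ and $M(k-1)$ are mutually independent, and $M(k+X)$ is independent of $I$ and $M(k-1)$.
   Context: Under LCFS-p-repeat (with resampling), the customer who has been in the system the least amount of time is always served, newly arriving customers preempt the customer in service (customers within a batch are labeled arbitrarily and treated as arriving sequentially), service is non-idling, and a preempted service must be restarted from scratch when service recommences, with a new service time drawn independently from the distribution of $S$. $Y=_dZ$ denotes equality in distribution. *)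

From HB Require Import structures.
From mathcomp Require Import all_boot all_order all_algebra.
From mathcomp Require Import all_classical all_reals all_analysis.
Set Implicit Arguments. Unset Strict Implicit. Unset Printing Implicit Defensive.
Import Order.TTheory GRing.Theory Num.Theory.
Local Open Scope classical_set_scope.
Local Open Scope ring_scope.

(* Embedded jump chain of the M^X/G/1 LCFS-p-repeat (with resampling) queue
   during a busy period.  At the j-th event epoch (j = 0,1,...) a fresh
   service attempt of length Sv j and a fresh exponential clock Ta j until the
   next batch arrival are run against each other (memorylessness of the
   Poisson arrival stream; under LCFS-p-repeat with resampling every service
   that starts or restarts gets a fresh service time).  If Ta j < Sv j a batch
   of Xb j customers arrives (and preempts); otherwise the customer in service
   departs.  [qlen k w j] is the number of customers in the system right after
   the j-th event of a busy period started by a batch of k customers; it is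
   frozen at 0 once the busy period ends. *)
Section Queue.
Context {d : measure_display} {T : measurableType d} {R : realType}.
Variables (Sv Ta : nat -> T -> R) (Xb : nat -> T -> nat).

Fixpoint qlen (k : nat) (w : T) (j : nat) : nat :=
  match j with
  | 0 => k
  | j'.+1 => let n := qlen k w j' in
             if n == 0%N then 0%N
             else if Ta j' w < Sv j' w then (n + Xb j' w)%N else n.-1
  end.

(* the event { f(M(k)) holds }, where M(k) is the maximum number of
   customers in the system during a busy period started by k customers
   (the busy period must end, i.e. M(k) is a finite maximum). *)
Definition busy_max_ev (k : nat) (f : nat -> Prop) : set T :=
  [set w | exists N : nat, qlen k w N = 0%N /\
                          f (\max_(j < N.+1) qlen k w j)%N].
End Queue.

(* Mutual independence of the whole family (Sv j, Ta j, Xb j)_{j : nat}: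
   product rule over every finite initial segment of indices and every
   choice of measurable sets (taking full sets gives every subfamily). *)
Definition mutually_indep {d} {T : measurableType d} {R : realType}
  (P : probability T R) (Sv Ta : nat -> T -> R) (Xb : nat -> T -> nat) : Prop :=
  forall (n : nat) (A B : nat -> set R) (C : nat -> set nat),
    (forall j, measurable (A j)) -> (forall j, measurable (B j)) ->
    P (\bigcap_(j in [set j | (j < n)%N])
          (Sv j @^-1` A j `&` Ta j @^-1` B j `&` Xb j @^-1` C j)) =
    (\prod_(j < n) (P (Sv j @^-1` A j) * P (Ta j @^-1` B j) * P (Xb j @^-1` C j)))%E.

From HB Require Import structures.
From mathcomp Require Import all_boot all_order all_algebra.
From mathcomp Require Import all_classical all_reals all_analysis.
From mathcomp Require Import measurable_realfun ring.
Import Order.TTheory GRing.Theory Num.Theory numFieldNormedType.Exports.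
Local Open Scope classical_set_scope.
Local Open Scope ring_scope.

(* The recursion is a first-step decomposition of the busy period.  Its first
   event is a race between a fresh service time and a fresh exponential clock:
   if the clock wins, a batch arrives and the busy period goes on from k + X
   customers, otherwise a customer leaves and it goes on from k - 1 customers,
   the maximum so far being k.  What follows the first event is the same
   functional of the shifted driving sequence (S_j, T_j, X_j)_(j >= 1).  On the
   canonical path space, whose sigma-algebra is generated by finite-dimensional
   boxes, the pi-lambda theorem turns the product rule for boxes into the two
   facts needed: the shifted path is independent of the first step, and, the
   driving sequence being i.i.d., it has the same law as the whole path. *)

Lemma pi_lambda {U : Type} {G H : set (set U)} :
  setI_closed G -> dynkin H -> G `<=` H -> <<s G >> `<=` H.
Proof.
move=> GI dH GH; rewrite -setI_closed_g_dynkin_g_sigma_algebra //.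
exact: smallest_sub.
Qed.

Section probability_laws.
Context {d} {T : measurableType d} {R : realType} (P : probability T R).

Lemma dynkin_preimage_eq {U : Type} (f g : T -> U) :
  dynkin [set C | [/\ measurable (f @^-1` C), measurable (g @^-1` C)
                    & P (f @^-1` C) = P (g @^-1` C)]].
Proof.
split.
- by rewrite /= !preimage_setT; split.
- move=> C [mf mg e]; rewrite /= -!preimage_setC.
  by split; [exact: measurableC|exact: measurableC|rewrite !probability_setC // e].
- move=> F tF HF; rewrite /= !preimage_bigcup.
  have trF (h : T -> U) : trivIset setT (fun k => h @^-1` F k).
    by move=> i j _ _ [w [? ?]]; apply: (tF i j I I); exists (h w).
  have [mfF mgF] : (forall k, measurable (f @^-1` F k)) /\
                   (forall k, measurable (g @^-1` F k)).
    by split=> k; case: (HF k).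
  split; [exact: bigcupT_measurable|exact: bigcupT_measurable|].
  rewrite !measure_bigcup //; apply: eq_eseriesr => k _.
  by case: (HF k).
Qed.

Lemma dynkin_indep (F : set T) : measurable F ->
  dynkin [set E | measurable E /\ P (E `&` F) = (P E * P F)%E].
Proof.
have fineP A : measurable A -> P A = (fine (P A))%:E.
  by move=> mA; rewrite fineK // fin_num_measure.
move=> mF; split.
- by rewrite /= setTI probability_setT mul1e.
- move=> E [mE e]; split; first exact: measurableC.
  rewrite setIC -setDE measureD; last 3 first.
  + exact: mF.
  + exact: mE.
  + by rewrite ltey_eq fin_num_measure.
  rewrite /= setIC e probability_setC //.
  by rewrite (fineP _ mE) (fineP _ mF) -!EFinM -!EFinB; congr EFin; ring.
- move=> G tG HG; have mG k : measurable (G k) by case: (HG k).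
  split; first exact: bigcupT_measurable.
  rewrite setI_bigcupl !measure_bigcup //; last 2 first.
  + by move=> k _; exact: measurableI.
  + by move=> i j _ _ [w [[? _] [? _]]]; apply: (tG i j I I); exists w.
  rewrite (fineP _ mF) muleC -nneseriesZl; last by move=> k _; exact: measure_ge0.
  rewrite -(fineP _ mF).
  by apply: eq_eseriesr => k _; rewrite muleC; case: (HG k).
Qed.

Lemma indep_g_sigma (G H : set (set T)) :
  setI_closed G -> setI_closed H -> G `<=` measurable -> H `<=` measurable ->
  (forall E F, G E -> H F -> P (E `&` F) = (P E * P F)%E) ->
  forall E F, <<s G >> E -> <<s H >> F -> P (E `&` F) = (P E * P F)%E.
Proof.
move=> GI HI GM HM indepGH E F sE sF.
have indepE F' : H F' -> P (E `&` F') = (P E * P F')%E.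
  move=> HF'.
  have GsubE : G `<=` [set E' | measurable E' /\ P (E' `&` F') = (P E' * P F')%E].
    by move=> E' GE'; split; [exact: GM|exact: indepGH].
  by case: (pi_lambda GI (dynkin_indep F' (HM _ HF')) GsubE _ sE).
have mE : measurable E.
  by apply: smallest_sub sE => //; exact: sigma_algebra_measurable.
have HsubF : H `<=` [set F' | measurable F' /\ P (F' `&` E) = (P F' * P E)%E].
  by move=> F' HF'; split; [exact: HM|rewrite setIC muleC; exact: indepE].
have [_] := pi_lambda HI (dynkin_indep E mE) HsubF _ sF.
by rewrite setIC muleC.
Qed.

Lemma law_eq_of_tails (X Y : T -> R) :
  measurable_fun setT X -> measurable_fun setT Y ->
  (forall t, P (X @^-1` `]t, +oo[) = P (Y @^-1` `]t, +oo[)) ->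
  forall B, measurable B -> P (X @^-1` B) = P (Y @^-1` B).
Proof.
move=> mX mY tailXY B.
have -> : @measurable _ R = <<s @RGenOInfty.G R >> := RGenOInfty.measurableE R.
move=> mB.
have GI : setI_closed (@RGenOInfty.G R).
  move=> _ _ [x ->] [y ->]; exists (Num.max x y).
  apply/seteqP; split=> z /=; rewrite !in_itv /= !andbT gt_max.
    by case=> -> ->.
  by case/andP.
have mpre (Z : T -> R) t : measurable_fun setT Z -> measurable (Z @^-1` `]t, +oo[).
  by move=> mZ; rewrite -[X in measurable X]setTI; exact: mZ.
have tails : @RGenOInfty.G R `<=` [set C | [/\ measurable (X @^-1` C),
    measurable (Y @^-1` C) & P (X @^-1` C) = P (Y @^-1` C)]].
  by move=> _ [t ->]; split; [exact: mpre|exact: mpre|exact: tailXY].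
by have [] := pi_lambda GI (dynkin_preimage_eq X Y) tails _ mB.
Qed.

Lemma law_eq_of_atoms (X Y : T -> nat) :
  (forall x, measurable (X @^-1` [set x])) -> (forall x, measurable (Y @^-1` [set x])) ->
  (forall x, P (X @^-1` [set x]) = P (Y @^-1` [set x])) ->
  forall C, P (X @^-1` C) = P (Y @^-1` C).
Proof.
move=> mX mY atomXY C.
have atoms (Z : T -> nat) : Z @^-1` C = \bigcup_(x in C) Z @^-1` [set x].
  by apply/seteqP; split=> [w Cw|w [x Cx /= ->//]]; exists (Z w).
have disj (Z : T -> nat) : trivIset C (fun x => Z @^-1` [set x]).
  by move=> x y _ _ [w [/= <- <-]].
rewrite (atoms X) (atoms Y) !measure_bigcup //.
by apply: eq_eseriesr => x _; exact: atomXY.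
Qed.

Lemma exponential_tail (X : T -> R) (lam : R) : measurable_fun setT X ->
  (forall t, 0 <= t -> P [set w | t < X w] = (expR (- (lam * t)))%:E) ->
  forall t, P (X @^-1` `]t, +oo[) = if 0 <= t then (expR (- (lam * t)))%:E else 1%E.
Proof.
move=> mX tailX t.
have itvE s : X @^-1` `]s, +oo[ = [set w | s < X w].
  by apply/seteqP; split=> w /=; rewrite in_itv /= andbT.
rewrite itvE; case: leP => [t0|t0]; first exact: tailX.
have mtail s : measurable [set w | s < X w].
  by rewrite -itvE -[X in measurable X]setTI; exact: mX.
apply/eqP; rewrite eq_le probability_le1 //=.
rewrite -[1%E](_ : P [set w | 0 < X w] = 1%E); last first.
  by rewrite tailX // mulr0 oppr0 expR0.
by apply: le_measure; rewrite ?inE // => w /= /(lt_trans t0).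
Qed.
End probability_laws.

Definition shift_seq {A : Type} (u : nat -> A) : nat -> A := fun j => u j.+1.

Section busy_period.
Context {d : measure_display} {T : measurableType d} {R : realType}.
Implicit Types (Sv Ta : nat -> T -> R) (Xb : nat -> T -> nat) (f : nat -> Prop).

Definition next_qlen Sv Ta Xb (k : nat) (w : T) : nat :=
  if Ta 0 w < Sv 0 w then (k + Xb 0 w)%N else k.-1.

Lemma qlen0 Sv Ta Xb w j : qlen Sv Ta Xb 0 w j = 0%N.
Proof. by elim: j => //= j ->. Qed.

Lemma qlenS Sv Ta Xb k w j : qlen Sv Ta Xb k w j.+1 =
  if k == 0%N then 0%N
  else qlen (shift_seq Sv) (shift_seq Ta) (shift_seq Xb) (next_qlen Sv Ta Xb k w) w j.
Proof.
elim: j => [|j IH]; first by rewrite /= /next_qlen; case: (k == 0%N).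
by move: IH => /= IH; rewrite IH; case: (k == 0%N).
Qed.

Definition busy_within Sv Ta Xb (N k : nat) f : set T :=
  [set w | qlen Sv Ta Xb k w N = 0%N /\ f (\max_(j < N.+1) qlen Sv Ta Xb k w j)%N].

Lemma busy_max_evE Sv Ta Xb k f :
  busy_max_ev Sv Ta Xb k f = \bigcup_N busy_within Sv Ta Xb N k f.
Proof. by apply/seteqP; split=> w [N]; exists N. Qed.

Lemma busy_within0 Sv Ta Xb k f :
  busy_within Sv Ta Xb 0 k f = [set _ | k = 0%N /\ f k].
Proof. by apply/seteqP; split=> w; rewrite /busy_within /= big_ord1. Qed.

Lemma busy_within_idle Sv Ta Xb N f :
  busy_within Sv Ta Xb N 0 f = [set _ | f 0%N].
Proof.
have max0 w : (\max_(j < N.+1) qlen Sv Ta Xb 0 w j)%N = 0%N.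
  by apply: big1 => j _; exact: qlen0.
by apply/seteqP; split=> w; rewrite /busy_within /= qlen0 max0; [case|].
Qed.

Lemma busy_withinS Sv Ta Xb N k f : k != 0%N ->
  busy_within Sv Ta Xb N.+1 k f =
  [set w | busy_within (shift_seq Sv) (shift_seq Ta) (shift_seq Xb) N
             (next_qlen Sv Ta Xb k w) (fun t => f (maxn k t)) w].
Proof.
move=> /negbTE k0; apply: eq_set => w.
rewrite big_ord_recl qlenS k0.
under eq_bigr do rewrite lift0 qlenS.
by rewrite k0.
Qed.

Lemma next_qlen_split Sv Ta Xb k (Q : nat -> set T) :
  [set w | Q (next_qlen Sv Ta Xb k w) w] =
  ([set w | Ta 0 w < Sv 0 w] `&` \bigcup_x (Xb 0 @^-1` [set x] `&` Q (k + x)%N))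
  `|` (~` [set w | Ta 0 w < Sv 0 w] `&` Q k.-1).
Proof.
rewrite /next_qlen; apply/seteqP; split=> w /=.
  by case: ifP => lt Qw; [left; split=> //; exists (Xb 0 w)|right; split=> //; rewrite lt].
case=> [[-> [x _ [-> //]]]|[/negP/negbTE -> //]].
Qed.

Lemma busy_max_evS Sv Ta Xb k f : k != 0%N ->
  busy_max_ev Sv Ta Xb k f =
  [set w | busy_max_ev (shift_seq Sv) (shift_seq Ta) (shift_seq Xb)
             (next_qlen Sv Ta Xb k w) (fun t => f (maxn k t)) w].
Proof.
move=> k0; rewrite busy_max_evE; apply/seteqP; split=> w.
  case=> -[_|N _]; first by rewrite busy_within0 => -[/eqP]; rewrite (negbTE k0).
  by rewrite busy_withinS // => ?; exists N.
by case=> N ?; exists N.+1 => //; rewrite busy_withinS.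
Qed.

Lemma busy_max_ev_split Sv Ta Xb k f : k != 0%N ->
  busy_max_ev Sv Ta Xb k f =
  ([set w | Ta 0 w < Sv 0 w] `&` \bigcup_x (Xb 0 @^-1` [set x] `&`
      busy_max_ev (shift_seq Sv) (shift_seq Ta) (shift_seq Xb) (k + x)%N
        (fun t => f (maxn k t))))
  `|` (~` [set w | Ta 0 w < Sv 0 w] `&`
      busy_max_ev (shift_seq Sv) (shift_seq Ta) (shift_seq Xb) k.-1
        (fun t => f (maxn k t))).
Proof.
move=> k0; rewrite busy_max_evS //.
exact: (next_qlen_split _ _ _ _ (fun y => busy_max_ev _ _ _ y _)).
Qed.

Lemma busy_max_ev_maxn Sv Ta Xb k k' f : (k' <= k)%N ->
  busy_max_ev Sv Ta Xb k (fun t => f (maxn k' t)) = busy_max_ev Sv Ta Xb k f.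
Proof.
move=> k'k; apply: eq_set => w; apply: propext.
have k'max N : (k' <= \max_(j < N.+1) qlen Sv Ta Xb k w j)%N.
  exact: leq_trans k'k (leq_bigmax (F := fun j : 'I_N.+1 => qlen Sv Ta Xb k w j) ord0).
by split=> -[N [q0 fmax]]; exists N; split; rewrite // (maxn_idPr (k'max N)) in fmax *.
Qed.

Lemma measurable_const_set (p : Prop) : measurable [set _ : T | p].
Proof.
have [hp|hp] := pselect p.
  by rewrite (_ : [set _ | p] = setT) //; apply/seteqP; split.
by rewrite (_ : [set _ | p] = set0) //; apply/seteqP; split.
Qed.

Lemma qlen_comp {d'} {T' : measurableType d'} (phi : T' -> T) Sv Ta Xb k w j :
  qlen (fun i => Sv i \o phi) (fun i => Ta i \o phi) (fun i => Xb i \o phi) k w j =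
  qlen Sv Ta Xb k (phi w) j.
Proof. by elim: j => //= j ->. Qed.

Lemma busy_max_ev_comp {d'} {T' : measurableType d'} (phi : T' -> T) Sv Ta Xb k f :
  busy_max_ev (fun i => Sv i \o phi) (fun i => Ta i \o phi) (fun i => Xb i \o phi) k f =
  phi @^-1` busy_max_ev Sv Ta Xb k f.
Proof.
have qmax w N : (\max_(j < N.+1) qlen (fun i => Sv i \o phi) (fun i => Ta i \o phi)
    (fun i => Xb i \o phi) k w j = \max_(j < N.+1) qlen Sv Ta Xb k (phi w) j)%N.
  by apply: eq_bigr => j _; exact: qlen_comp.
by apply/seteqP; split=> w [N h]; exists N; rewrite qlen_comp qmax in h *.
Qed.

Lemma measurable_lt_fun {f g : T -> R} :
  measurable_fun setT f -> measurable_fun setT g -> measurable [set w | f w < g w].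
Proof.
move=> mf mg; rewrite -[X in measurable X]setTI.
by apply: (measurable_fun_ltr mf mg measurableT).
Qed.

Lemma measurable_busy_within N : forall Sv Ta Xb k f,
  (forall j, measurable_fun setT (Sv j)) -> (forall j, measurable_fun setT (Ta j)) ->
  (forall j x, measurable (Xb j @^-1` [set x])) ->
  measurable (busy_within Sv Ta Xb N k f).
Proof.
elim: N => [|N IH] Sv Ta Xb k f mSv mTa mXb.
  by rewrite busy_within0; exact: measurable_const_set.
have [->|k0] := eqVneq k 0%N.
  by rewrite busy_within_idle; exact: measurable_const_set.
have mlt := measurable_lt_fun (mTa 0%N) (mSv 0%N).
have mQ y : measurable (busy_within (shift_seq Sv) (shift_seq Ta) (shift_seq Xb) N y
                          (fun t => f (maxn k t))).
  by apply: IH => j; [exact: mSv|exact: mTa|exact: mXb].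
rewrite busy_withinS // (next_qlen_split _ _ _ _ (fun y => busy_within _ _ _ N y _)).
apply: measurableU; apply: measurableI => //.
- by apply: bigcupT_measurable => x; apply: measurableI.
- exact: measurableC.
Qed.

Lemma measurable_busy_max_ev Sv Ta Xb k f :
  (forall j, measurable_fun setT (Sv j)) -> (forall j, measurable_fun setT (Ta j)) ->
  (forall j x, measurable (Xb j @^-1` [set x])) ->
  measurable (busy_max_ev Sv Ta Xb k f).
Proof.
move=> mSv mTa mXb; rewrite busy_max_evE; apply: bigcupT_measurable => N.
exact: measurable_busy_within.
Qed.
End busy_period.

Definition supported {X : Type} (p : pred nat) (A : nat -> set X) : Prop :=
  forall j, ~~ p j -> A j = setT.

Lemma supported_sub {X : Type} (p q : pred nat) (A : nat -> set X) :
  {subset p <= q} -> supported p A -> supported q A.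
Proof. by move=> pq sA j qj; apply: sA; apply: contra qj; exact: pq. Qed.

Lemma supportedI {X : Type} (p : pred nat) (A A' : nat -> set X) :
  supported p A -> supported p A' -> supported p (fun j => A j `&` A' j).
Proof. by move=> sA sA' j pj; rewrite sA // sA' // setIT. Qed.

Definition cons_setT {X : Type} (D : nat -> set X) : nat -> set X :=
  fun j => if j is i.+1 then D i else setT.

Section boxes.
Variable R : realType.
Implicit Types (A B : nat -> set R) (C : nat -> set nat) (pS pT pX : pred nat).

Definition box A B C : set (nat -> R * R * nat) :=
  [set s | forall j, (A j `*` B j `*` C j) (s j)].

Definition box_on pS pT pX (n : nat) A B C : Prop :=
  [/\ forall j, measurable (A j) /\ measurable (B j),
      supported [pred j | pS j && (j < n)%N] A,
      supported [pred j | pT j && (j < n)%N] B &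
      supported [pred j | pX j && (j < n)%N] C].

Definition boxes pS pT pX : set (set (nat -> R * R * nat)) :=
  [set E | exists n A B C, box_on pS pT pX n A B C /\ E = box A B C].

Lemma boxI A B C A' B' C' : box A B C `&` box A' B' C' =
  box (fun j => A j `&` A' j) (fun j => B j `&` B' j) (fun j => C j `&` C' j).
Proof.
apply/seteqP; split=> s.
  by move=> [h h'] j; have [[? ?] ?] := h j; have [[? ?] ?] := h' j.
by move=> h; split=> j; have [[[? ?] [? ?]] [? ?]] := h j.
Qed.

Lemma box_on_sub {pS pT pX qS qT qX n m A B C} :
  {subset pS <= qS} -> {subset pT <= qT} -> {subset pX <= qX} -> (n <= m)%N ->
  box_on pS pT pX n A B C -> box_on qS qT qX m A B C.
Proof.
move=> sS sT sX nm [mAB sA sB sC].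
have sub p q : {subset p <= q} ->
    {subset [pred j | p j && (j < n)%N] <= [pred j | q j && (j < m)%N]}.
  move=> pq j; rewrite !inE => /andP[pj jn].
  by apply/andP; split; [exact: pq|exact: leq_trans jn nm].
split=> //; [exact: supported_sub (sub _ _ sS) sA|
  exact: supported_sub (sub _ _ sT) sB|exact: supported_sub (sub _ _ sX) sC].
Qed.

Lemma boxes_sub {pS pT pX qS qT qX} :
  {subset pS <= qS} -> {subset pT <= qT} -> {subset pX <= qX} ->
  boxes pS pT pX `<=` boxes qS qT qX.
Proof.
move=> sS sT sX _ [n [A [B [C [bA ->]]]]].
by exists n, A, B, C; split=> //; exact: box_on_sub bA.
Qed.

Lemma box_on_boxes {pS pT pX n A B C} :
  box_on pS pT pX n A B C -> boxes pS pT pX (box A B C).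
Proof. by move=> bA; exists n, A, B, C. Qed.

Lemma boxes_setI_closed pS pT pX : setI_closed (boxes pS pT pX).
Proof.
move=> _ _ [n [A [B [C [bA ->]]]]] [n' [A' [B' [C' [bA' ->]]]]].
exists (maxn n n'), (fun j => A j `&` A' j), (fun j => B j `&` B' j),
  (fun j => C j `&` C' j); split; last exact: boxI.
have [[mAB sA sB sC] [mAB' sA' sB' sC']] :=
  (box_on_sub (fun _ => id) (fun _ => id) (fun _ => id) (leq_maxl n n') bA,
   box_on_sub (fun _ => id) (fun _ => id) (fun _ => id) (leq_maxr n n') bA').
split; try exact: supportedI.
by move=> j; have [? ?] := mAB j; have [? ?] := mAB' j; split; exact: measurableI.
Qed.
End boxes.
Arguments box {R}.
Arguments box_on {R}.

Notation path_space R := (g_sigma_algebraType (boxes R predT predT predT)).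

Definition serv {R : realType} (j : nat) (s : path_space R) : R := (s j).1.1.
Definition clock {R : realType} (j : nat) (s : path_space R) : R := (s j).1.2.
Definition batch {R : realType} (j : nat) (s : path_space R) : nat := (s j).2.

Lemma boxes_measurable {R : realType} {pS pT pX : pred nat} :
  boxes R pS pT pX `<=` (measurable : set (set (path_space R))).
Proof.
move=> E bE; apply: sub_sigma_algebra.
exact: boxes_sub (fun _ _ => isT) (fun _ _ => isT) (fun _ _ => isT) _ bE.
Qed.

Lemma g_sigma_boxes_measurable {R : realType} {pS pT pX : pred nat} :
  <<s boxes R pS pT pX >> `<=` (measurable : set (set (path_space R))).
Proof. by apply: smallest_sub; [exact: sigma_algebra_measurable|exact: boxes_measurable]. Qed.

Section coordinates.
Variables (R : realType) (pS pT pX : pred nat).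
Local Notation U := (g_sigma_algebraType (boxes R pS pT pX)).

Lemma boxes_at j (A B : set R) (C : set nat) : measurable A -> measurable B ->
  (~~ pS j -> A = setT) -> (~~ pT j -> B = setT) -> (~~ pX j -> C = setT) ->
  boxes R pS pT pX [set s | (A `*` B `*` C) (s j)].
Proof.
move=> mA mB hA hB hC.
pose at_j (X : Type) (D : set X) (i : nat) : set X := if i == j then D else setT.
have at_j_supported X (D : set X) (p : pred nat) : (~~ p j -> D = setT) ->
    supported [pred i | p i && (i < j.+1)%N] (at_j X D).
  move=> hD i /=; case: (eqVneq i j) => [->|/negbTE ij _]; rewrite /at_j ?eqxx.
    by rewrite leqnn andbT; exact: hD.
  by rewrite ij.
exists j.+1, (at_j _ A), (at_j _ B), (at_j _ C); split; first split.
- by move=> i; rewrite /at_j; split; case: ifP.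
- exact: at_j_supported.
- exact: at_j_supported.
- exact: at_j_supported.
apply/seteqP; split=> s; rewrite /at_j /=; first by move=> h i; case: eqVneq => [->|].
by move=> /(_ j); rewrite eqxx.
Qed.

Lemma measurable_serv j : pS j -> measurable_fun (setT : set U) (serv j).
Proof.
move=> pj _ A mA; rewrite setTI; apply: sub_sigma_algebra.
rewrite (_ : _ @^-1` _ = [set s | (A `*` setT `*` setT) (s j)]).
  by apply: boxes_at => //; rewrite pj.
by apply/seteqP; split=> s //= [[]].
Qed.

Lemma measurable_clock j : pT j -> measurable_fun (setT : set U) (clock j).
Proof.
move=> pj _ B mB; rewrite setTI; apply: sub_sigma_algebra.
rewrite (_ : _ @^-1` _ = [set s | (setT `*` B `*` setT) (s j)]).
  by apply: boxes_at => //; rewrite pj.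
by apply/seteqP; split=> s //= [[]].
Qed.

Lemma measurable_batch j x : pX j -> measurable (batch j @^-1` [set x] : set U).
Proof.
move=> pj; apply: sub_sigma_algebra.
rewrite (_ : _ @^-1` _ = [set s | (setT `*` setT `*` [set x]) (s j)]).
  by apply: boxes_at => //; rewrite pj.
by apply/seteqP; split=> s //= [[]].
Qed.
End coordinates.

Notation shift_path R :=
  (@shift_seq (R * R * nat)%type : path_space R -> path_space R).

Section path_events.
Variable R : realType.
Implicit Types (A B : nat -> set R) (C : nat -> set nat).

Lemma busy_max_ev_shift_path k f :
  busy_max_ev (shift_seq (@serv R)) (shift_seq clock) (shift_seq batch) k f =
  shift_path R @^-1` busy_max_ev serv clock batch k f.
Proof. exact: busy_max_ev_comp. Qed.

Lemma measurable_busy_path k f : measurable (busy_max_ev (@serv R) clock batch k f).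
Proof.
exact: measurable_busy_max_ev (fun j => measurable_serv R predT predT predT j isT)
  (fun j => measurable_clock R predT predT predT j isT)
  (fun j x => measurable_batch R predT predT predT j x isT).
Qed.

Lemma g_sigma_shifted_busy (pX : pred nat) k f : (forall j, pX j.+1) ->
  <<s boxes R (predC1 0%N) (predC1 0%N) pX >>
    (shift_path R @^-1` busy_max_ev serv clock batch k f).
Proof.
move=> pXS; rewrite -busy_max_ev_comp.
exact: (measurable_busy_max_ev
  (T := g_sigma_algebraType (boxes R (predC1 0%N) (predC1 0%N) pX)) _ _ _ _ _
  (fun j => measurable_serv _ _ _ _ j.+1 isT) (fun j => measurable_clock _ _ _ _ j.+1 isT)
  (fun j x => measurable_batch _ _ _ _ j.+1 x (pXS j))).
Qed.

Lemma g_sigma_first_race :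
  <<s boxes R (pred1 0%N) (pred1 0%N) pred0 >> [set s : path_space R | clock 0 s < serv 0 s].
Proof.
exact: (measurable_lt_fun (T := g_sigma_algebraType (boxes R (pred1 0%N) (pred1 0%N) pred0))
  (measurable_clock R (pred1 0%N) (pred1 0%N) pred0 0 (eqxx 0%N))
  (measurable_serv R (pred1 0%N) (pred1 0%N) pred0 0 (eqxx 0%N))).
Qed.

Lemma preimage_shift_box A B C :
  shift_path R @^-1` box A B C = box (cons_setT A) (cons_setT B) (cons_setT C).
Proof.
apply/seteqP; split=> s; first by move=> h [|j] //; exact: h.
by move=> h j; exact: (h j.+1).
Qed.

Lemma box_on_cons_setT {n A B C} : box_on predT predT predT n A B C ->
  box_on predT predT predT n.+1 (cons_setT A) (cons_setT B) (cons_setT C).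
Proof.
case=> mAB sA sB sC; split; first by case=> [|j] //=; exact: mAB.
- by case=> [|j] //= jn; exact: sA.
- by case=> [|j] //= jn; exact: sB.
- by case=> [|j] //= jn; exact: sC.
Qed.
End path_events.

Section iid_paths.
Variables (R : realType) (Q : probability (path_space R) R).
Variables (muS muT : set R -> \bar R) (muX : set nat -> \bar R).
Hypotheses (muS1 : muS setT = 1%E) (muT1 : muT setT = 1%E) (muX1 : muX setT = 1%E).
Implicit Types (A B : nat -> set R) (C : nat -> set nat).
Hypothesis Q_box : forall n A B C, box_on predT predT predT n A B C ->
  Q (box A B C) = (\prod_(j < n) (muS (A j) * muT (B j) * muX (C j)))%E.

Lemma measure_shift_preimage (E : set (path_space R)) :
  measurable E -> Q (shift_path R @^-1` E) = Q E.
Proof.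
have box_law : boxes R predT predT predT `<=`
    [set E | [/\ measurable (shift_path R @^-1` E), measurable (id @^-1` E)
               & Q (shift_path R @^-1` E) = Q (id @^-1` E)]].
  move=> _ [n [A [B [C [bA ->]]]]] /=; have bA' := box_on_cons_setT _ bA.
  rewrite preimage_shift_box preimage_id.
  split; [apply: boxes_measurable; exact: box_on_boxes bA'|
          apply: boxes_measurable; exact: box_on_boxes bA|].
  rewrite (Q_box _ _ _ _ bA) (Q_box _ _ _ _ bA') big_ord_recl /=.
  by rewrite muS1 muT1 muX1 !mul1e.
move=> mE; by have [] := pi_lambda (boxes_setI_closed R predT predT predT)
  (dynkin_preimage_eq Q (shift_path R) id) box_law _ mE.
Qed.

Lemma indep_boxes pS pT pX qS qT qX :
  (forall j, ~~ (pS j && qS j)) -> (forall j, ~~ (pT j && qT j)) ->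
  (forall j, ~~ (pX j && qX j)) ->
  forall E F, <<s boxes R pS pT pX >> E -> <<s boxes R qS qT qX >> F ->
  Q (E `&` F) = (Q E * Q F)%E.
Proof.
move=> dS dT dX; apply: (indep_g_sigma Q);
  [exact: boxes_setI_closed|exact: boxes_setI_closed|exact: boxes_measurable|
   exact: boxes_measurable|].
move=> _ _ [n [A [B [C [bA ->]]]]] [n' [A' [B' [C' [bA' ->]]]]].
have widen pS' pT' pX' m A0 B0 C0 : (m <= maxn n n')%N ->
    box_on pS' pT' pX' m A0 B0 C0 -> box_on predT predT predT (maxn n n') A0 B0 C0.
  exact: box_on_sub (fun _ _ => isT) (fun _ _ => isT) (fun _ _ => isT).
have [bAn bAn'] := (widen _ _ _ _ _ _ _ (leq_maxl n n') bA,
                    widen _ _ _ _ _ _ _ (leq_maxr n n') bA').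
have bAI : box_on predT predT predT (maxn n n')
    (fun j => A j `&` A' j) (fun j => B j `&` B' j) (fun j => C j `&` C' j).
  have [mAB sA sB sC] := bAn; have [mAB' sA' sB' sC'] := bAn'.
  split; try exact: supportedI.
  by move=> j; have [? ?] := mAB j; have [? ?] := mAB' j; split; exact: measurableI.
rewrite boxI (Q_box _ _ _ _ bAI) (Q_box _ _ _ _ bAn) (Q_box _ _ _ _ bAn') -big_split.
apply: eq_bigr => j _ /=.
have mulI X (mu : set X -> \bar R) (D D' : set X) : mu setT = 1%E ->
    D = setT \/ D' = setT -> mu (D `&` D') = (mu D * mu D')%E.
  by move=> mu1 [->|->]; rewrite ?setTI ?setIT mu1 ?mul1e ?mule1.
have disj X (p q : pred nat) m m' (D D' : nat -> set X) : ~~ (p j && q j) ->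
    supported [pred i | p i && (i < m)%N] D -> supported [pred i | q i && (i < m')%N] D' ->
    D j = setT \/ D' j = setT.
  move=> pq sD sD'; case pj: (p j); [right; apply: sD'|left; apply: sD].
    by move: pq; rewrite pj /= => /negbTE ->.
  by rewrite inE pj.
have [_ sA sB sC] := bA; have [_ sA' sB' sC'] := bA'.
rewrite (mulI _ _ _ _ muS1 (disj _ _ _ _ _ _ _ (dS j) sA sA')).
rewrite (mulI _ _ _ _ muT1 (disj _ _ _ _ _ _ _ (dT j) sB sB')).
rewrite (mulI _ _ _ _ muX1 (disj _ _ _ _ _ _ _ (dX j) sC sC')).
by rewrite [X in (X * _)%E]muleACA [LHS]muleACA.
Qed.

Lemma indep_first_race E0 E :
  <<s boxes R (pred1 0%N) (pred1 0%N) pred0 >> E0 ->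
  <<s boxes R (predC1 0%N) (predC1 0%N) predT >> E -> Q (E0 `&` E) = (Q E0 * Q E)%E.
Proof. by apply: indep_boxes => j; rewrite /= ?andbN. Qed.

Lemma indep_first_batch x E :
  <<s boxes R (predC1 0%N) (predC1 0%N) (predC1 0%N) >> E ->
  Q (batch 0 @^-1` [set x] `&` E) = (Q (batch 0 @^-1` [set x]) * Q E)%E.
Proof.
apply: (indep_boxes pred0 pred0 (pred1 0%N)) => [j|j|j|] //=; first by rewrite andbN.
exact: measurable_batch R pred0 pred0 (pred1 0%N) 0 x (eqxx 0%N).
Qed.

Lemma busy_first_step k f : k != 0%N ->
  Q (busy_max_ev (@serv R) clock batch k f) =
  (Q [set s | (clock 0 s < serv 0 s)%R] *
     (\sum_(0 <= x <oo) Q (batch 0 @^-1` [set x]) *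
        Q (busy_max_ev serv clock batch (k + x) (fun t => f (maxn k t))))
   + Q (~` [set s | (clock 0 s < serv 0 s)%R]) *
       Q (busy_max_ev serv clock batch k.-1 (fun t => f (maxn k t))))%E.
Proof.
move=> k0; set L := [set s | _ < _].
pose S y := shift_path R @^-1` busy_max_ev serv clock batch y (fun t => f (maxn k t)).
have mS y : measurable (S y) :=
  g_sigma_boxes_measurable _ (g_sigma_shifted_busy R predT _ _ (fun=> isT)).
have mL : measurable L := g_sigma_boxes_measurable _ (g_sigma_first_race R).
have mX x : measurable (batch 0 @^-1` [set x] : set (path_space R)) :=
  measurable_batch R predT predT predT 0 x isT.
have g_sigma_batch_S x y : <<s boxes R (predC1 0%N) (predC1 0%N) predT >>
    (batch 0 @^-1` [set x] `&` S y).
  apply: (@measurableI _ (g_sigma_algebraType (boxes R (predC1 0%N) (predC1 0%N) predT))).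
    exact: measurable_batch R (predC1 0%N) (predC1 0%N) predT 0 x isT.
  exact: g_sigma_shifted_busy.
have QS y : Q (S y) = Q (busy_max_ev serv clock batch y (fun t => f (maxn k t))).
  by apply: measure_shift_preimage; exact: measurable_busy_path.
rewrite busy_max_ev_split //; under eq_bigcupr do rewrite busy_max_ev_shift_path.
rewrite busy_max_ev_shift_path -/L measureU; last 3 first.
- apply: measurableI _ _ mL _; apply: bigcupT_measurable => x.
  exact: measurableI _ _ (mX x) (mS _).
- exact: measurableI _ _ (measurableC mL) (mS _).
- by apply/seteqP; split=> // s [[? _] [? _]].
rewrite /= setI_bigcupr (measure_bigcup Q setT); last 2 first.
- by move=> x _; exact: measurableI _ _ mL (measurableI _ _ (mX x) (mS _)).
- by move=> x x' _ _ [s [[_ [/= <- _]] [_ [/= <- _]]]].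
rewrite (@eq_eseriesl _ _ predT); last by move=> x; rewrite in_setT.
rewrite indep_first_race ?QS; last 2 first.
- by apply: sigma_algebraC; exact: g_sigma_first_race.
- exact: g_sigma_shifted_busy.
congr (_ + _)%E.
have fin_L : Q L = (fine (Q L))%:E by rewrite fineK // fin_num_measure.
rewrite fin_L -nneseriesZl; last by move=> x _; exact: mule_ge0.
apply: eq_eseriesr => x _; rewrite -fin_L /= indep_first_race; last 2 first.
- exact: g_sigma_first_race.
- exact: g_sigma_batch_S.
by rewrite indep_first_batch ?QS //; exact: g_sigma_shifted_busy.
Qed.
End iid_paths.

Section driving_sequence.
Context {d} {T : measurableType d} {R : realType}.
Variables (Sv Ta : nat -> T -> R) (Xb : nat -> T -> nat).
Hypotheses (mSv : forall j, measurable_fun setT (Sv j))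
  (mTa : forall j, measurable_fun setT (Ta j))
  (mXb : forall j x, measurable (Xb j @^-1` [set x])).

Lemma measurable_Xb j C : measurable (Xb j @^-1` C).
Proof.
rewrite (_ : _ @^-1` _ = \bigcup_(x in C) Xb j @^-1` [set x]).
  by apply: bigcup_measurable => x _; exact: mXb.
by apply/seteqP; split=> [w Cw|w [x Cx /= ->//]]; exists (Xb j w).
Qed.

Definition path_of (w : T) : path_space R := fun j => (Sv j w, Ta j w, Xb j w).

Lemma preimage_path_of_box {n A B C} : box_on predT predT predT n A B C ->
  path_of @^-1` box A B C =
  \bigcap_(j in [set j | (j < n)%N]) (Sv j @^-1` A j `&` Ta j @^-1` B j `&` Xb j @^-1` C j).
Proof.
case=> _ sA sB sC; apply/seteqP; split=> [w h j _|w h j]; first exact: h.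
have [jn|nj] := ltnP j n; first exact: h.
by rewrite /= sA ?sB ?sC //= -leqNgt.
Qed.

Lemma measurable_path_of : measurable_fun setT path_of.
Proof.
apply: (@measurability _ _ T (path_space R) setT path_of (boxes R predT predT predT) erefl).
move=> _ [_ [n [A [B [C [bA ->]]]]] <-].
rewrite setTI (preimage_path_of_box bA) bigcap_mkord.
have [mAB _ _ _] := bA; apply: bigsetI_measurable => j _; have [mA mB] := mAB j.
apply: measurableI; [apply: measurableI|exact: measurable_Xb].
- by rewrite -[X in measurable X]setTI; exact: mSv.
- by rewrite -[X in measurable X]setTI; exact: mTa.
Qed.

Lemma preimage_path_of_busy k f :
  path_of @^-1` busy_max_ev serv clock batch k f = busy_max_ev Sv Ta Xb k f.
Proof. exact: esym (busy_max_ev_comp path_of serv clock batch k f). Qed.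

Lemma measure_path_of_box (P : probability T R) : mutually_indep P Sv Ta Xb ->
  (forall j A, measurable A -> P (Sv j @^-1` A) = P (Sv 0%N @^-1` A)) ->
  (forall j B, measurable B -> P (Ta j @^-1` B) = P (Ta 0%N @^-1` B)) ->
  (forall j C, P (Xb j @^-1` C) = P (Xb 0%N @^-1` C)) ->
  forall n A B C, box_on predT predT predT n A B C ->
  P (path_of @^-1` box A B C) = (\prod_(j < n)
    (P (Sv 0%N @^-1` A j) * P (Ta 0%N @^-1` B j) * P (Xb 0%N @^-1` C j)))%E.
Proof.
move=> indep SvD TaD XbD n A B C bA; have [mAB _ _ _] := bA.
rewrite (preimage_path_of_box bA) indep => [|j|j]; try by have [] := mAB j.
by apply: eq_bigr => j _; have [mA mB] := mAB j; rewrite SvD // TaD // XbD.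
Qed.
End driving_sequence.

Theorem theorem3 (d : measure_display) (T : measurableType d) (R : realType)
  (P : probability T R) (lam mu : R)
  (Sv Ta : nat -> T -> R) (Xb : nat -> T -> nat) :
  (* Poisson batch arrivals of rate lam: clocks Ta j ~ Exp(lam) *)
  0 < lam ->
  (forall j, measurable_fun setT (Ta j)) ->
  (forall j (t : R), 0 <= t -> P [set w | t < Ta j w] = (expR (- (lam * t)))%:E) ->
  (* i.i.d. service times distributed as S := Sv 0 (nonnegative) *)
  (forall j, measurable_fun setT (Sv j)) ->
  (forall j, P [set w | Sv j w < 0] = 0%E) ->
  (forall j (A : set R), measurable A -> P (Sv j @^-1` A) = P (Sv 0%N @^-1` A)) ->
  (* i.i.d. batch sizes distributed as X := Xb 0 (positive), with mean mu *)
  (forall j (x : nat), measurable (Xb j @^-1` [set x])) ->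
  (forall j, P (Xb j @^-1` [set 0%N]) = 0%E) ->
  (forall j (x : nat), P (Xb j @^-1` [set x]) = P (Xb 0%N @^-1` [set x])) ->
  (\int[P]_w ((Xb 0%N w)%:R : R)%:E = mu%:E)%E ->
  (* all independent *)
  mutually_indep P Sv Ta Xb ->
  (* stability: E(exp(-lam S)) > mu/(mu+1) *)
  ((mu / (mu + 1))%:E < \int[P]_w (expR (- (lam * Sv 0%N w)))%:E)%E ->
  (* M(k) =_d I M(k+X) + (1-I) max{k, M(k-1)},  with I = 1{T < S} *)
  forall k : nat, (1 <= k)%N -> forall n : nat,
    P (busy_max_ev Sv Ta Xb k (eq n)) =
    (P [set w | (Ta 0%N w < Sv 0%N w)%R] *
       (\sum_(0 <= x <oo)
           P (Xb 0%N @^-1` [set x]) * P (busy_max_ev Sv Ta Xb (k + x) (eq n)))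
     + P [set w | (Sv 0%N w <= Ta 0%N w)%R] *
         P (busy_max_ev Sv Ta Xb k.-1 (fun m => maxn k m = n)))%E.
Proof.
move=> _ mTa TaD mSv _ SvD mXb _ XbD _ indep _ k k1 n.
have TaE j B : measurable B -> P (Ta j @^-1` B) = P (Ta 0%N @^-1` B).
  apply: (law_eq_of_tails P) => // t.
  by rewrite !(exponential_tail P _ _ (mTa _) (TaD _)).
have XbE j C : P (Xb j @^-1` C) = P (Xb 0%N @^-1` C).
  exact: law_eq_of_atoms P _ _ (mXb j) (mXb 0%N) (XbD j) C.
pose Q : probability (path_space R) R := distribution P (MeasurableFun.Pack
  (MeasurableFun.Class (isMeasurableFun.Build _ _ _ _ _
    (measurable_path_of Sv Ta Xb mSv mTa mXb)))).
have QE E : Q E = P (path_of Sv Ta Xb @^-1` E) by [].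
have mass1 (X : Type) (Z : T -> X) : P (Z @^-1` setT) = 1%E.
  by rewrite preimage_setT probability_setT.
rewrite -preimage_path_of_busy -QE (busy_first_step _ Q (fun A => P (Sv 0%N @^-1` A))
  (fun B => P (Ta 0%N @^-1` B)) (fun C => P (Xb 0%N @^-1` C)) (mass1 _ _) (mass1 _ _)
  (mass1 _ _) (measure_path_of_box _ _ _ P indep SvD TaE XbE)); last by rewrite -lt0n.
congr (_ * _ + _ * _)%E.
- apply: eq_eseriesr => x _.
  by rewrite !QE preimage_path_of_busy busy_max_ev_maxn // leq_addr.
- by rewrite QE; apply: congr1; apply/seteqP; split=> w /=; rewrite leNgt => /negP.
- rewrite QE preimage_path_of_busy; congr (P (busy_max_ev _ _ _ _ _)).
  by apply: funext => m; apply: propext; split=> ->.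
Qed.
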